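(* Fix a time $t\ge0$, a multiplier $\lambda\ge0$, and a differentiable parametric policy $\pi_\theta(a\mid x)$ with $\pi_\theta(a\mid x)>0$ implying $\pi_0(a\mid x)>0$ (common support), and assume $L$ and $C$ are conditionally independent given $(x,a)$. Let $c(x,a)$ be a known cost function, $\hat\pi_0,\hat G,\hat S$ fixed (not depending on $\mathcal{D}$) models with $\hat G(t\mid x,a)>0$ and $\hat\pi_0(a\mid x)>0$ whenever $\pi_\theta(a\mid x)>0$, and $\hat w'(x,a)=\pi_\theta(a\mid x)/\hat\pi_0(a\mid x)$. Define $$\widehat{\nabla_\theta L}_{\mathrm{IPCW\text{-}IPS}}=\frac1n\sum_{i=1}^n \hat w'(x_i,a_i)\Big(\frac{\mathbb{I}\{T_i>t\}}{\hat G(t\mid x_i,a_i)}-\lambda c(x_i,a_i)\Big)\nabla_\theta\log\pi_\theta(a_i\mid x_i),$$ $$\widehat{\nabla_\theta L}_{\mathrm{IPCW\text{-}DR}}=\frac1n\sum_{i=1}^n\Big(\hat w'(x_i,a_i)\Big(\frac{\mathbb{I}\{T_i>t\}}{\hat G(t\mid x_i,a_i)}-\hat S(x_i,a_i,t)\Big)\nabla_\theta\log\pi_\theta(a_i\mid x_i)+\sum_{a\in\mathcal{A}}\pi_\theta(a\mid x_i)\big(\hat S(x_i,a,t)-\lambda c(x_i,a)\big)\nabla_\theta\log\pi_\theta(a\mid x_i)\Big).$$ Let $R_\lambda(x,a,t)=S(x,a,t)-\lambda c(x,a)$ and $g(\theta)=\mathbb{E}_{p(x)\pi_\theta(a\mid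 x)}[R_\lambda(x,a,t)\nabla_\theta\log\pi_\theta(a\mid x)]$ (the Lagrangian policy gradient $\nabla_\theta L(\pi_\theta,t,\lambda)$). Suppose $\hat G(t\mid x,a)=G(t\mid x,a)$ for all $x,a$. Then $\mathbb{E}_{\mathcal{D}}[\widehat{\nabla_\theta L}_{\mathrm{IPCW\text{-}IPS}}]=g(\theta)$ if $\hat\pi_0=\pi_0$, and $\mathbb{E}_{\mathcal{D}}[\widehat{\nabla_\theta L}_{\mathrm{IPCW\text{-}DR}}]=g(\theta)$ if either $\hat\pi_0=\pi_0$ or $\hat S(x,a,t)=S(x,a,t)$ for all $x,a$.
   Context: Let $\mathcal{X}$ be a context space and $\mathcal{A}$ a finite action set. A policy $\pi(a\mid x)$ is a conditional distribution over $\mathcal{A}$ given $x$. The logged data $\mathcal{D}=\{(x_i,a_i,T_i,r_i)\}_{i=1}^n$ consists of $n$ i.i.d. draws generated by $(x,a,L,C)\sim p(x)\pi_0(a\mid x)p(L,C\mid x,a)$ for a logging policy $\pi_0$, where $L\ge0$ is the latent survival time, $C\ge0$ the censoring time, and only $T=\min\{L,C\}$ and $r=\mathbb{I}\{L\le C\}$ are observed. Define $S(x,a,t)=P(L>t\mid x,a)$, $G(t\mid x,a)=P(C>t\mid x,a)$, $V(\pi,t)=\mathbb{E}_{p(x)\pi(a\mid x)}[S(x,a,t)]$, the expected cost $C(\pi)=\mathbb{E}_{p(x)\pi(a\mid x)}[c(x,a)]$, and for a budget $B$ the Lagrangian $L(\pi_\theta,t,\lambda)=V(\pi_\theta,t)-\lambda(C(\pi_\theta)-B)$.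 *)

From HB Require Import structures.
From mathcomp Require Import all_boot all_order all_algebra.
From mathcomp Require Import all_classical all_reals all_analysis.
From mathcomp Require Import measurable_realfun.
Set Implicit Arguments. Unset Strict Implicit. Unset Printing Implicit Defensive.
Import Order.TTheory GRing.Theory Num.Theory.
Import numFieldNormedType.Exports.
Local Open Scope classical_set_scope.
Local Open Scope ring_scope.

Section Defs.
Context {R : realType} {dX : measure_display} {X : measurableType dX}
  {A : finType} {m : nat}.

(* PLC x a : joint law p(L,C | x,a) of (latent survival time, censoring time) *)

Definition surv (PLC : X -> A -> probability (R * R)%type R) (x : X) (a : A) (t : R) : R :=
  fine (PLC x a ([set l | t < l] `*` [set: R])).

Definition cens (PLC : X -> A -> probability (R * R)%type R) (t : R) (x : X) (a : A) : R :=
  fine (PLC x a ([set: R] `*` [set c | t < c])).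

Definition dlogpi (pol : 'rV[R]_m -> X -> A -> R) (th : 'rV[R]_m) (x : X) (a : A)
  (j : 'I_m) : R :=
  'D_(delta_mx 0 j) (fun th' => ln (pol th' x a)) th.

Definition ips_term (pol : 'rV[R]_m -> X -> A -> R) (pi0h : X -> A -> R)
  (Gh : R -> X -> A -> R) (c : X -> A -> R) (lam t : R) (th : 'rV[R]_m)
  (j : 'I_m) (x : X) (a : A) (T : R) : R :=
  pol th x a / pi0h x a * ((if t < T then 1 else 0) / Gh t x a - lam * c x a) * dlogpi pol th x a j.

Definition dr_term (pol : 'rV[R]_m -> X -> A -> R) (pi0h : X -> A -> R)
  (Gh : R -> X -> A -> R) (Sh : X -> A -> R -> R) (c : X -> A -> R) (lam t : R)
  (th : 'rV[R]_m) (j : 'I_m) (x : X) (a : A) (T : R) : R :=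
  pol th x a / pi0h x a * ((if t < T then 1 else 0) / Gh t x a - Sh x a t) * dlogpi pol th x a j
  + \sum_(b : A) pol th x b * (Sh x b t - lam * c x b) * dlogpi pol th x b j.

Definition lag_grad (px : probability X R) (PLC : X -> A -> probability (R * R)%type R)
  (pol : 'rV[R]_m -> X -> A -> R) (c : X -> A -> R) (lam t : R) (th : 'rV[R]_m)
  (j : 'I_m) : \bar R :=
  (\int[px]_x (\sum_(a : A) pol th x a * (surv PLC x a t - lam * c x a)
                 * dlogpi pol th x a j)%:E)%E.

(* the dataset: n random samples (x_i, a_i, L_i, C_i) on a probability space;
   observed T_i = min(L_i, C_i), r_i = 1{L_i <= C_i}. *)
Definition sample_event {d : measure_display} {Om : measurableType d}
  (Xs : Om -> X) (As : Om -> A) (Ls Cs : Om -> R)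
  (B : set X) (D : set A) (E F : set R) : set Om :=
  [set w | B (Xs w) /\ D (As w) /\ E (Ls w) /\ F (Cs w)].

Definition samples_indep {d : measure_display} {Om : measurableType d}
  (P : probability Om R) (n : nat)
  (Xs : 'I_n -> Om -> X) (As : 'I_n -> Om -> A) (Ls Cs : 'I_n -> Om -> R) : Prop :=
  forall (B : 'I_n -> set X) (D : 'I_n -> set A) (E F : 'I_n -> set R),
    (forall i, measurable (B i)) -> (forall i, measurable (E i)) ->
    (forall i, measurable (F i)) ->
    P (\bigcap_(i in [set: 'I_n]) sample_event (Xs i) (As i) (Ls i) (Cs i) (B i) (D i) (E i) (F i))
    = (\prod_(i < n) P (sample_event (Xs i) (As i) (Ls i) (Cs i) (B i) (D i) (E i) (F i)))%E.

Definition sample_law {d : measure_display} {Om : measurableType d}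
  (P : probability Om R) (px : probability X R) (pi0 : X -> A -> R)
  (PLC : X -> A -> probability (R * R)%type R)
  (Xs : Om -> X) (As : Om -> A) (Ls Cs : Om -> R) : Prop :=
  forall (B : set X) (a : A) (E F : set R),
    measurable B -> measurable E -> measurable F ->
    P (sample_event Xs As Ls Cs B [set a] E F)
    = (\int[px]_(x in B) ((pi0 x a)%:E * PLC x a (E `*` F)))%E.

End Defs.

(* Each summand of either estimator depends on the observed time T = min(L, C)
   only through the indicator 1{T > t}, and since L and C are independent
   given (x, a), that indicator is Bernoulli with parameter S(x,a,t) G(t|x,a).
   Disintegrating the law of one sample along X (the events {A = a, 1{T > t} = b}
   have densities pi0(a|x) P(1{T > t} = b | x, a) with respect to p(x)) turns its
   expectation into an integral over p(x) of a finite sum. When the censoring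
   model is correct, 1{T > t} / G has conditional mean S (inverse probability
   of censoring weighting), and the importance weight pi_theta / hat pi0 then
   cancels pi0 when hat pi0 = pi0. For the doubly robust estimator the
   correction term has mean pi0 pi_theta / hat pi0 (S - hat S): it vanishes when
   hat S = S, and when hat pi0 = pi0 it combines with the direct term into
   pi_theta (S - lambda c). All samples share one marginal law, so the average
   has the expectation of a single summand. *)

From HB Require Import structures.
From mathcomp Require Import all_boot all_order all_algebra.
From mathcomp Require Import all_classical all_reals all_analysis.
From mathcomp Require Import measurable_realfun.
From mathcomp Require Import ring.
Import Order.TTheory GRing.Theory Num.Theory.
Import numFieldNormedType.Exports.
Local Open Scope classical_set_scope.
Local Open Scope ring_scope.
Set Implicit Arguments. Unset Strict Implicit.

Section integral_comp_density.
Local Open Scope ereal_scope.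
Context d (Om : measurableType d) dX (X : measurableType dX) (R : realType).
Variables (P : {measure set Om -> \bar R}) (px : {measure set X -> \bar R}).
Variables (Xf : Om -> X) (S : set Om) (rho : X -> R).
Hypotheses (mXf : measurable_fun setT Xf) (mS : measurable S).
Hypotheses (rho_ge0 : forall x, (0 <= rho x)%R) (mrho : measurable_fun setT rho).
Hypothesis density : forall B, measurable B ->
  P (S `&` Xf @^-1` B) = \int[px]_(x in B) (rho x)%:E.

Import HBNNSimple.

Lemma nnsfun_integral_comp_density (h : {nnsfun X >-> R}) :
  \int[P]_(w in S) (h (Xf w))%:E = \int[px]_x ((h x)%:E * (rho x)%:E).
Proof.
have mpre y : measurable (Xf @^-1` (h @^-1` [set y])).
  by rewrite -[X in measurable X]setTI; exact: mXf.
transitivity (\int[P]_(w in S)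
    (\sum_(y \in range h) (y * \1_(Xf @^-1` (h @^-1` [set y])) w)%:E)).
  by apply: eq_integral => w _; rewrite fimfunE -fsumEFin.
transitivity (\int[px]_x (\sum_(y \in range h)
    (y * \1_(h @^-1` [set y]) x)%:E * (rho x)%:E)); last first.
  apply: eq_integral => x _.
  rewrite -ge0_mule_fsuml => [|y]; last exact: nnfun_muleindic_ge0.
  by rewrite fsumEFin // -(fimfunE _ x).
rewrite !ge0_integral_fsum//; first last.
- by move=> y w _; rewrite EFinM nnfun_muleindic_ge0.
- by move=> y; apply/measurable_EFinP; exact: measurable_funM.
- move=> y x _; apply: mule_ge0; last by rewrite lee_fin.
  by rewrite EFinM nnfun_muleindic_ge0.
- move=> y; apply/emeasurable_funM; apply/measurable_EFinP => //.
  exact/measurable_funM/measurable_indic.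
apply: eq_fsbigr => r /[!inE] -[x _ <-].
rewrite (integralZl_indic mS (fun k => Xf @^-1` (h @^-1` [set k])))//; last first.
  move=> r0; apply/seteqP; split=> // w /= hw.
  by move: r0; rewrite -hw ltNge fun_ge0.
under [RHS]eq_integral do rewrite EFinM -muleA.
rewrite ge0_integralZl ?lee_fin//; first last.
- by move=> y _; rewrite mule_ge0 ?lee_fin.
- by apply: emeasurable_funM; apply/measurable_EFinP => //; exact: measurable_indic.
rewrite integral_indic// setIC density// integral_mkcond; congr (_ * _).
apply: eq_integral => y _; rewrite patchE /= indicE.
by case: (_ \in _); rewrite ?mul1e ?mul0e.
Qed.

Lemma ge0_integral_comp_density (f : X -> \bar R) :
  (forall x, 0 <= f x) -> measurable_fun setT f ->
  \int[P]_(w in S) f (Xf w) = \int[px]_x (f x * (rho x)%:E).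
Proof.
move=> f0 mf; pose h := nnsfun_approx measurableT mf.
have hf x : (fun n => ((h n) x)%:E) @ \oo --> f x by exact: cvg_nnsfun_approx.
have h_nd x : {homo (fun n => ((h n) x)%:E) : a b / (a <= b)%N >-> a <= b}.
  by move=> a b ab; rewrite lee_fin; exact/lefP/nd_nnsfun_approx.
transitivity (lim (\int[P]_(w in S) ((h n) (Xf w))%:E @[n --> \oo])).
  rewrite -monotone_convergence//.
  - by apply: eq_integral => w _; apply/esym/cvg_lim => //; exact: hf.
  - move=> n; apply/measurable_EFinP; apply: measurable_funTS.
    by apply: measurableT_comp => //; exact: measurable_funP.
  - by move=> n w _; rewrite lee_fin.
under eq_fun do rewrite nnsfun_integral_comp_density.
rewrite -monotone_convergence//.
- by apply: eq_integral => x _; apply/cvg_lim => //; apply: cvgeZr => //; exact: hf.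
- by move=> n; apply/emeasurable_funM; apply/measurable_EFinP.
- by move=> n x _; rewrite mule_ge0 ?lee_fin.
- by move=> x _ a b ab; rewrite lee_wpmul2r ?lee_fin//; exact: h_nd.
Qed.

Variable psi : X -> R.
Hypothesis mpsi : measurable_fun setT psi.

Let mEpsi : measurable_fun setT (EFin \o psi). Proof. exact/measurable_EFinP. Qed.

Lemma integrable_comp_density : P.-integrable S (fun w => (psi (Xf w))%:E) ->
  px.-integrable setT (fun x => (psi x * rho x)%:E).
Proof.
move=> ipsi; apply/integrableP; split.
  by apply/measurable_EFinP; exact: measurable_funM.
under eq_integral do rewrite EFinM abseM (gee0_abs (x := (rho _)%:E)) ?lee_fin//.
rewrite -(@ge0_integral_comp_density (abse \o (EFin \o psi))) //.
- by case/integrableP: ipsi.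
- by move=> x; exact: abse_ge0.
- exact: measurableT_comp.
Qed.

Lemma integral_comp_density :
  \int[P]_(w in S) (psi (Xf w))%:E = \int[px]_x (psi x * rho x)%:E.
Proof.
have posE x : (fun x => (psi x * rho x)%:E)^\+ x = (EFin \o psi)^\+ x * (rho x)%:E.
  by rewrite !funeposE /= maxe_pMl ?lee_fin// mul0e EFinM.
have negE x : (fun x => (psi x * rho x)%:E)^\- x = (EFin \o psi)^\- x * (rho x)%:E.
  by rewrite !funenegE /= maxe_pMl ?lee_fin// mul0e -EFinM mulNr.
rewrite integralE [RHS]integralE.
under [in RHS]eq_integral do rewrite posE.
under [X in _ = _ - X]eq_integral do rewrite negE.
rewrite -!ge0_integral_comp_density//; last 2 first.
- exact: measurable_funeneg.
- exact: measurable_funepos.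
by congr (_ - _); apply: eq_integral => w _; rewrite ?funeposE ?funenegE.
Qed.

End integral_comp_density.

Section integral_partition_mean.
Local Open Scope ereal_scope.
Context d (T : measurableType d) (R : realType) (mu : {measure set T -> \bar R}).

Lemma integral_preimage_partition (I : finType) (obs : T -> I) (f : T -> R) :
  (forall i, measurable (obs @^-1` [set i])) ->
  measurable_fun setT (fun x => (f x)%:E) ->
  \int[mu]_x (f x)%:E =
  (\sum_(i : I) (\int[mu]_(x in obs @^-1` [set i]) (f x)%:E)%E)%R.
Proof.
move=> mobs mf.
have cover : \big[setU/set0]_(i <- enum I) obs @^-1` [set i] = setT.
  apply/seteqP; split => // w _; rewrite -bigcup_seq.
  by exists (obs w); rewrite /= ?mem_enum.
rewrite -cover integral_bigsetU_EFin ?enum_uniq//.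
- by rewrite big_enum.
- by move=> i j _ _ [w [/= <- <-]].
- by rewrite cover.
Qed.

Lemma integral_mean (n : nat) (f : 'I_n -> T -> R) (v : \bar R) : (0 < n)%N ->
  (forall i, mu.-integrable setT (fun x => (f i x)%:E)) ->
  (forall i, \int[mu]_x (f i x)%:E = v) ->
  \int[mu]_x ((n%:R)^-1 * \sum_(i < n) f i x)%:E = v.
Proof.
move=> n_gt0 intf intfE.
have vfin : v \is a fin_num by rewrite -(intfE (Ordinal n_gt0)) integrable_fin_num.
under eq_integral do rewrite EFinM -sumEFin.
rewrite integralZl//; last by apply: integrable_sum => // i _.
rewrite integral_sum//; under eq_bigr do rewrite intfE.
rewrite sumr_const card_ord -(fineK vfin).
have -> : ((fine v)%:E *+ n)%R = (fine v *+ n)%:E by rewrite EFin_natmul.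
by rewrite -EFinM -[(fine v *+ n)%R]mulr_natl mulKf// pnatr_eq0 -lt0n.
Qed.

End integral_partition_mean.

Lemma measurable_inv (R : realType) : measurable_fun setT (@GRing.inv R).
Proof.
rewrite -(setvU [set (0:R)]) measurable_funU//; last exact: measurableC.
split; last exact: measurable_fun_set1.
apply: open_continuous_measurable_fun.
  apply: closed_openC; apply: accessible_closed_set1.
  by apply: hausdorff_accessible; exact: Rhausdorff.
by move=> x; rewrite inE /= => x0; apply: inv_continuous; exact/eqP.
Qed.

Lemma measurable_set_gtr (R : realType) (t : R) : measurable [set l : R | t < l].
Proof. by rewrite -set_itvoy; exact: measurable_itv. Qed.

Lemma fine_probability_ge0_le1 {d} {T : measurableType d} {R : realType}
    (Q : probability T R) (E : set T) :
  measurable E -> 0 <= fine (Q E) <= 1.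
Proof.
move=> mE; rewrite fine_ge0 ?measure_ge0//=.
by rewrite -lee_fin fineK ?fin_num_measure ?probability_le1.
Qed.

Section observed_survival.
Context {R : realType} {dX : measure_display} {X : measurableType dX} {A : finType}.
Variables (PLC : X -> A -> probability (R * R)%type R) (t : R).

(* P(1{T > t} = b | x, a), as {T > t} = {L > t} `&` {C > t} and L, C are
   independent given (x, a). *)
Definition obs_prob (x : X) (a : A) (b : bool) : R :=
  let q := surv PLC x a t * cens PLC t x a in if b then q else 1 - q.

Lemma obs_prob_ge0 x a b : 0 <= obs_prob x a b.
Proof.
have /andP[S0 S1] : 0 <= surv PLC x a t <= 1.
  by apply: fine_probability_ge0_le1; apply: measurableX => //; exact: measurable_set_gtr.
have /andP[G0 G1] : 0 <= cens PLC t x a <= 1.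
  by apply: fine_probability_ge0_le1; apply: measurableX => //; exact: measurable_set_gtr.
by case: b; rewrite /obs_prob ?subr_ge0 ?mulr_ge0// mulr_ile1.
Qed.

Lemma obs_prob_sum1 x a : \sum_(b : bool) obs_prob x a b = 1.
Proof. by rewrite big_bool /= addrC subrK. Qed.

Lemma measurable_obs_prob a b :
  (forall E, measurable E -> measurable_fun setT (fun x => (PLC x a E : \bar R))) ->
  measurable_fun setT (fun x => obs_prob x a b).
Proof.
move=> mPLC.
have mfine E : measurable E -> measurable_fun setT (fun x => fine (PLC x a E)).
  by move=> mE; exact: measurableT_comp (mPLC E mE).
have mq : measurable_fun setT (fun x => surv PLC x a t * cens PLC t x a).
  by apply: measurable_funM; apply: mfine; apply: measurableX => //;
    exact: measurable_set_gtr.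
by case: b => //; exact: measurable_funB.
Qed.

Lemma obs_prob_ipcw x a (w k e : R) : w = 0 \/ cens PLC t x a != 0 ->
  \sum_(b : bool) obs_prob x a b * (w * ((if b then 1 else 0) / cens PLC t x a - k) * e)
  = w * (surv PLC x a t - k) * e.
Proof. by rewrite big_bool /obs_prob /=; case=> [->|G0]; [ring | field]. Qed.

End observed_survival.

Section one_sample.
Context {R : realType} {dX : measure_display} {X : measurableType dX} {A : finType}.
Context {d : measure_display} {Om : measurableType d}.
Variables (px : probability X R) (pi0 : X -> A -> R).
Variables (PLC : X -> A -> probability (R * R)%type R) (t : R).
Hypotheses (pi0_ge0 : forall x a, 0 <= pi0 x a)
  (mpi0 : forall a, measurable_fun setT (fun x => pi0 x a))
  (mPLC : forall a E, measurable E ->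
     measurable_fun setT (fun x => (PLC x a E : \bar R)))
  (PLC_indep : forall x a E F, measurable E -> measurable F ->
     PLC x a (E `*` F) = (PLC x a (E `*` [set: R]) * PLC x a ([set: R] `*` F))%E).
Variables (P : probability Om R) (Xf : Om -> X) (Af : Om -> A) (Lf Cf : Om -> R).
Hypotheses (mXf : measurable_fun setT Xf) (mAf : forall a, measurable [set w | Af w = a])
  (mLf : measurable_fun setT Lf) (mCf : measurable_fun setT Cf)
  (law : sample_law P px pi0 PLC Xf Af Lf Cf).

Let obs w := (Af w, t < Num.min (Lf w) (Cf w)).
Let K := [set w | t < Num.min (Lf w) (Cf w)].

Let measurable_preimage_Xf B : measurable B -> measurable (Xf @^-1` B).
Proof. by move=> mB; rewrite -[X in measurable X]setTI; exact: mXf. Qed.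

Let measurable_K : measurable K.
Proof.
have -> : K = Lf @^-1` [set l | t < l] `&` Cf @^-1` [set l | t < l].
  by apply/seteqP; split => w; rewrite /K /= lt_min => /andP.
have mgt := measurable_set_gtr t.
by apply: measurableI; rewrite -[X in measurable X]setTI; [exact: mLf | exact: mCf].
Qed.

Let measurable_obs p : measurable (obs @^-1` [set p]).
Proof.
case: p => a b.
have -> : obs @^-1` [set (a, b)] =
    [set w | Af w = a] `&` [set w | (t < Num.min (Lf w) (Cf w)) = b].
  by apply/seteqP; split => w /= [<- <-].
apply: measurableI => //; case: b; first exact: measurable_K.
have -> : [set w | (t < Num.min (Lf w) (Cf w)) = false] = ~` K.
  by apply/seteqP; split => w /=; [move/negbT/negP | move/negP/negbTE].
exact: measurableC.
Qed.

Let action_law a B : measurable B ->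
  P ([set w | Af w = a] `&` Xf @^-1` B) = (\int[px]_(x in B) (pi0 x a)%:E)%E.
Proof.
move=> mB.
have -> : [set w | Af w = a] `&` Xf @^-1` B =
    sample_event Xf Af Lf Cf B [set a] [set: R] [set: R].
  by rewrite /sample_event; apply/seteqP; split => [w [? ?]|w [? []]].
by rewrite law//; apply: eq_integral => x _; rewrite setXTT probability_setT mule1.
Qed.

Let obs_cell_law_true a B : measurable B ->
  P (obs @^-1` [set (a, true)] `&` Xf @^-1` B) =
  (\int[px]_(x in B) (pi0 x a * obs_prob PLC t x a true)%:E)%E.
Proof.
move=> mB; have mgt := measurable_set_gtr t.
have -> : obs @^-1` [set (a, true)] `&` Xf @^-1` B =
    sample_event Xf Af Lf Cf B [set a] [set l | t < l] [set l | t < l].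
  apply/seteqP; split => w /=.
    by rewrite /obs => -[[<-]]; rewrite lt_min => /andP[? ?] ?.
  by case=> ? [<- [? ?]]; rewrite /obs lt_min; split => //; congr pair; apply/andP.
rewrite law//; apply: eq_integral => x _.
rewrite PLC_indep// /obs_prob /surv /cens !EFinM !fineK//.
  by apply: fin_num_measure; exact: measurableX.
by apply: fin_num_measure; exact: measurableX.
Qed.

Let obs_cell_law a b B : measurable B ->
  P (obs @^-1` [set (a, b)] `&` Xf @^-1` B) =
  (\int[px]_(x in B) (pi0 x a * obs_prob PLC t x a b)%:E)%E.
Proof.
move=> mB; case: b; first exact: obs_cell_law_true.
pose Q := [set w | Af w = a] `&` Xf @^-1` B.
have mQ : measurable Q by apply: measurableI => //; exact: measurable_preimage_Xf.
have cell_true : obs @^-1` [set (a, true)] `&` Xf @^-1` B = Q `&` K.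
  rewrite /obs /Q; apply/seteqP; split => [w [[<- wK] wB]|w [[<- wB] wK]].
    by split; first split.
  by split => //=; rewrite wK.
have cell_false : obs @^-1` [set (a, false)] `&` Xf @^-1` B = Q `\` K.
  rewrite /obs /Q; apply/seteqP; split => [w [[<- /negbT/negP ?] ?]//|].
  by move=> w [[<- ?] /negP/negbTE wK]; split => //=; rewrite wK.
have mpi0q b : measurable_fun setT (fun x => pi0 x a * obs_prob PLC t x a b).
  by apply: measurable_funM => //; exact: measurable_obs_prob (mPLC a).
have pi0E : (\int[px]_(x in B) (pi0 x a)%:E =
    \int[px]_(x in B) (pi0 x a * obs_prob PLC t x a false)%:E +
    \int[px]_(x in B) (pi0 x a * obs_prob PLC t x a true)%:E)%E.
  rewrite -ge0_integralD//; first last.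
  - by apply/measurable_EFinP; exact: measurable_funTS.
  - by move=> x _; rewrite lee_fin mulr_ge0 ?obs_prob_ge0.
  - by apply/measurable_EFinP; exact: measurable_funTS.
  - by move=> x _; rewrite lee_fin mulr_ge0 ?obs_prob_ge0.
  by apply: eq_integral => x _; rewrite -EFinD -mulrDr /obs_prob subrK mulr1.
have -> : P (obs @^-1` [set (a, false)] `&` Xf @^-1` B) = (P Q - P (Q `&` K))%E.
  by rewrite cell_false measureD// -ge0_fin_numE ?fin_num_measure.
rewrite action_law// pi0E -cell_true obs_cell_law_true// addeK//.
rewrite -obs_cell_law_true//; apply: fin_num_measure.
by apply: measurableI => //; exact: measurable_preimage_Xf.
Qed.

Let obs_cell_expectation (F : X -> A -> bool -> R) a b :
  measurable_fun setT (fun x => F x a b) ->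
  P.-integrable setT (fun w => (F (Xf w) (Af w) (t < Num.min (Lf w) (Cf w)))%:E) ->
  px.-integrable setT (fun x => (F x a b * (pi0 x a * obs_prob PLC t x a b))%:E) /\
  (\int[P]_(w in obs @^-1` [set (a, b)])
     (F (Xf w) (Af w) (t < Num.min (Lf w) (Cf w)))%:E =
   \int[px]_x (F x a b * (pi0 x a * obs_prob PLC t x a b))%:E)%E.
Proof.
move=> mF intF.
have mrho : measurable_fun setT (fun x => pi0 x a * obs_prob PLC t x a b).
  by apply: measurable_funM => //; exact: measurable_obs_prob (mPLC a).
have rho_ge0 x : 0 <= pi0 x a * obs_prob PLC t x a b.
  by rewrite mulr_ge0 ?obs_prob_ge0.
have onF : {in obs @^-1` [set (a, b)], forall w,
    F (Xf w) (Af w) (t < Num.min (Lf w) (Cf w)) = F (Xf w) a b}.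
  by move=> w; rewrite inE /obs => -[-> ->].
have intFab : P.-integrable (obs @^-1` [set (a, b)]) (fun w => (F (Xf w) a b)%:E).
  apply: eq_integrable (integrableS measurableT _ _ intF) => // w wab.
  by rewrite onF.
split.
  exact (integrable_comp_density mXf (measurable_obs _) rho_ge0 mrho
    (obs_cell_law a b) mF intFab).
rewrite (eq_integral (fun w => (F (Xf w) a b)%:E)); last by move=> w /onF ->.
exact (integral_comp_density mXf (measurable_obs _) rho_ge0 mrho (obs_cell_law a b) mF).
Qed.

Lemma sample_expectation (F : X -> A -> bool -> R) :
  (forall a b, measurable_fun setT (fun x => F x a b)) ->
  P.-integrable setT (fun w => (F (Xf w) (Af w) (t < Num.min (Lf w) (Cf w)))%:E) ->
  (\int[P]_w (F (Xf w) (Af w) (t < Num.min (Lf w) (Cf w)))%:E =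
   \int[px]_x (\sum_(a : A) pi0 x a *
     \sum_(b : bool) obs_prob PLC t x a b * F x a b)%:E)%E.
Proof.
move=> mF intF.
rewrite (integral_preimage_partition _ measurable_obs); last exact: measurable_int intF.
rewrite (eq_bigr (fun p => \int[px]_x
    (F x p.1 p.2 * (pi0 x p.1 * obs_prob PLC t x p.1 p.2))%:E)%E); last first.
  by move=> [a b] _; exact: (obs_cell_expectation (mF a b) intF).2.
rewrite -integral_sum//; last first.
  by move=> [a b]; exact: (obs_cell_expectation (mF a b) intF).1.
apply: eq_integral => x _; rewrite sumEFin; congr EFin.
rewrite -(pair_big xpredT xpredT (fun a b => F x a b * (pi0 x a * obs_prob PLC t x a b))).
apply: eq_bigr => a _; rewrite big_distrr; apply: eq_bigr => b _ /=.
by rewrite mulrC mulrA.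
Qed.

End one_sample.

Section ipcw_estimators.
Context {R : realType} {dX : measure_display} {X : measurableType dX} {A : finType}.
Context {m : nat}.
Variables (PLC : X -> A -> probability (R * R)%type R) (pol : 'rV[R]_m -> X -> A -> R).
Variables (th : 'rV[R]_m) (c pi0 pi0h : X -> A -> R) (Gh : R -> X -> A -> R).
Variables (Sh : X -> A -> R -> R) (lam t : R) (j : 'I_m).

(* [ips_term ... x a T] is convertible to [ips_term_ind ... x a (t < T)],
   and [dr_term] to [dr_term_ind]. *)
Definition ips_term_ind x a (b : bool) : R :=
  pol th x a / pi0h x a * ((if b then 1 else 0) / Gh t x a - lam * c x a)
  * dlogpi pol th x a j.

Definition dr_term_ind x a (b : bool) : R :=
  pol th x a / pi0h x a * ((if b then 1 else 0) / Gh t x a - Sh x a t)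
  * dlogpi pol th x a j
  + \sum_(a' : A) pol th x a' * (Sh x a' t - lam * c x a') * dlogpi pol th x a' j.

Hypotheses (pol_ge0 : forall x a, 0 <= pol th x a)
  (pi0_supp : forall x a, 0 < pol th x a -> 0 < pi0 x a)
  (Gh_gt0 : forall x a, 0 < pol th x a -> 0 < Gh t x a)
  (Gh_cens : forall x a, Gh t x a = cens PLC t x a).

Let pol_eq0_or_gt0 x a : pol th x a = 0 \/ 0 < pol th x a.
Proof. by have := pol_ge0 x a; rewrite le_eqVlt => /orP[/eqP <-|]; [left | right]. Qed.

Let weight_eq0_or_cens_neq0 x a (k : R) : pol th x a / k = 0 \/ cens PLC t x a != 0.
Proof.
case: (pol_eq0_or_gt0 x a) => [->|pol_gt0]; first by left; rewrite mul0r.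
by right; rewrite -Gh_cens lt0r_neq0 ?Gh_gt0.
Qed.

Let mul_importance_weight x a (r : R) :
  pi0 x a * (pol th x a / pi0 x a * r) = pol th x a * r.
Proof.
case: (pol_eq0_or_gt0 x a) => [->|pol_gt0]; first by rewrite !mul0r mulr0.
by rewrite mulrA mulrCA divff ?mulr1 // lt0r_neq0 ?pi0_supp.
Qed.

Lemma ips_term_ind_mean x : (forall a, pi0h x a = pi0 x a) ->
  \sum_(a : A) pi0 x a * \sum_(b : bool) obs_prob PLC t x a b * ips_term_ind x a b =
  \sum_(a : A) pol th x a * (surv PLC x a t - lam * c x a) * dlogpi pol th x a j.
Proof.
move=> pi0hE; apply: eq_bigr => a _; rewrite /ips_term_ind Gh_cens pi0hE.
rewrite obs_prob_ipcw; last exact: weight_eq0_or_cens_neq0.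
by rewrite -mulrA mul_importance_weight mulrA.
Qed.

Lemma dr_term_ind_mean x : \sum_(a : A) pi0 x a = 1 ->
  (forall a, pi0h x a = pi0 x a) \/ (forall a, Sh x a t = surv PLC x a t) ->
  \sum_(a : A) pi0 x a * \sum_(b : bool) obs_prob PLC t x a b * dr_term_ind x a b =
  \sum_(a : A) pol th x a * (surv PLC x a t - lam * c x a) * dlogpi pol th x a j.
Proof.
move=> pi0_sum1 model_ok.
pose W := \sum_(a' : A) pol th x a' * (Sh x a' t - lam * c x a') * dlogpi pol th x a' j.
have cond_mean a : \sum_(b : bool) obs_prob PLC t x a b * dr_term_ind x a b =
    pol th x a / pi0h x a * (surv PLC x a t - Sh x a t) * dlogpi pol th x a j + W.
  under eq_bigr do rewrite /dr_term_ind mulrDr.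
  by rewrite big_split /= -mulr_suml obs_prob_sum1 mul1r Gh_cens obs_prob_ipcw.
under eq_bigr do rewrite cond_mean mulrDr.
rewrite big_split /= -mulr_suml pi0_sum1 mul1r.
case: model_ok => [pi0hE | ShE].
  rewrite /W -big_split /=; apply: eq_bigr => a _.
  by rewrite pi0hE -[X in pi0 x a * X]mulrA mul_importance_weight; ring.
rewrite big1 ?add0r; last by move=> a _; rewrite ShE subrr mulr0 mul0r mulr0.
by apply: eq_bigr => a _; rewrite ShE.
Qed.

Hypotheses (mpol : forall a, measurable_fun setT (fun x => pol th x a))
  (mpi0h : forall a, measurable_fun setT (fun x => pi0h x a))
  (mGh : forall a, measurable_fun setT (fun x => Gh t x a))
  (mSh : forall a, measurable_fun setT (fun x => Sh x a t))
  (mc : forall a, measurable_fun setT (fun x => c x a))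
  (mdlogpi : forall a, measurable_fun setT (fun x => dlogpi pol th x a j)).

Let measurable_ipcw_summand a b (k : X -> R) : measurable_fun setT k ->
  measurable_fun setT (fun x => pol th x a / pi0h x a *
    ((if b then 1 else 0) / Gh t x a - k x) * dlogpi pol th x a j).
Proof.
move=> mk; apply: measurable_funM => //; apply: measurable_funM.
  apply: measurable_funM => //; apply: measurableT_comp => //; exact: measurable_inv.
apply: measurable_funB => //; apply: measurable_funM => //.
apply: measurableT_comp => //; exact: measurable_inv.
Qed.

Lemma measurable_ips_term_ind a b : measurable_fun setT (fun x => ips_term_ind x a b).
Proof. by apply: measurable_ipcw_summand; apply: measurable_funM. Qed.

Lemma measurable_dr_term_ind a b : measurable_fun setT (fun x => dr_term_ind x a b).
Proof.
apply: measurable_funD; first exact: measurable_ipcw_summand.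
apply: measurable_sum => a'; apply: measurable_funM => //; apply: measurable_funM => //.
by apply: measurable_funB => //; apply: measurable_funM.
Qed.

End ipcw_estimators.

Unset Implicit Arguments.

Theorem mainTheorem5
  (R : realType) (dX : measure_display) (X : measurableType dX) (A : finType)
  (m : nat)
  (* context distribution, logging policy, joint law of (L, C) given (x, a) *)
  (px : probability X R) (pi0 : X -> A -> R)
  (PLC : X -> A -> probability (R * R)%type R)
  (* parametric policy, parameter, cost, models, time, multiplier *)
  (pol : 'rV[R]_m -> X -> A -> R) (th : 'rV[R]_m) (c : X -> A -> R)
  (pi0h : X -> A -> R) (Gh : R -> X -> A -> R) (Sh : X -> A -> R -> R)
  (t lam : R)
  (* the logged data *)
  (d : measure_display) (Om : measurableType d) (P : probability Om R) (n : nat)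
  (Xs : 'I_n -> Om -> X) (As : 'I_n -> Om -> A) (Ls Cs : 'I_n -> Om -> R) :
  (* basic assumptions *)
  0 <= t -> 0 <= lam -> (0 < n)%N ->
  (forall x a, 0 <= pi0 x a) -> (forall x, \sum_(a : A) pi0 x a = 1) ->
  (forall a, measurable_fun [set: X] (fun x => pi0 x a)) ->
  (forall th' x a, 0 <= pol th' x a) -> (forall th' x, \sum_(a : A) pol th' x a = 1) ->
  (forall x a, differentiable (fun th' => pol th' x a) th) ->
  (forall x a, 0 < pol th x a -> 0 < pi0 x a) ->
  (forall x a, PLC x a ([set l | 0 <= l] `*` [set c | 0 <= c]) = 1%E) ->
  (forall a (E : set (R * R)), measurable E ->
     measurable_fun [set: X] (fun x => (PLC x a E : \bar R))) ->
  (* conditional independence of L and C given (x, a) *)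
  (forall x a E F, measurable E -> measurable F ->
     PLC x a (E `*` F) = (PLC x a (E `*` [set: R]) * PLC x a ([set: R] `*` F))%E) ->
  (* measurability of the (fixed) models, cost, and score function *)
  (forall a, measurable_fun [set: X] (fun x => pol th x a)) ->
  (forall a, measurable_fun [set: X] (fun x => pi0h x a)) ->
  (forall a, measurable_fun [set: X] (fun x => Gh t x a)) ->
  (forall a, measurable_fun [set: X] (fun x => Sh x a t)) ->
  (forall a, measurable_fun [set: X] (fun x => c x a)) ->
  (forall a j, measurable_fun [set: X] (fun x => dlogpi pol th x a j)) ->
  (forall x a, 0 < pol th x a -> 0 < Gh t x a /\ 0 < pi0h x a) ->
  (* data generation: i.i.d. draws from p(x) pi_0(a|x) p(L,C|x,a) *)
  (forall i, measurable_fun [set: Om] (Xs i)) ->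
  (forall i a, measurable [set w | As i w = a]) ->
  (forall i, measurable_fun [set: Om] (Ls i)) ->
  (forall i, measurable_fun [set: Om] (Cs i)) ->
  (forall i, sample_law P px pi0 PLC (Xs i) (As i) (Ls i) (Cs i)) ->
  samples_indep P Xs As Ls Cs ->
  (* integrability (regularity) assumptions *)
  (forall i j, P.-integrable [set: Om] (fun w =>
      (ips_term pol pi0h Gh c lam t th j (Xs i w) (As i w)
         (Num.min (Ls i w) (Cs i w)))%:E)) ->
  (forall i j, P.-integrable [set: Om] (fun w =>
      (dr_term pol pi0h Gh Sh c lam t th j (Xs i w) (As i w)
         (Num.min (Ls i w) (Cs i w)))%:E)) ->
  (forall j, px.-integrable [set: X] (fun x =>
      (\sum_(a : A) pol th x a * (surv PLC x a t - lam * c x a)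
                      * dlogpi pol th x a j)%:E)) ->
  (* correct censoring model *)
  (forall x a, Gh t x a = cens PLC t x a) ->
  (* conclusions *)
  ((forall x a, pi0h x a = pi0 x a) ->
     forall j : 'I_m,
       (\int[P]_w ((n%:R)^-1 * \sum_(i < n)
           ips_term pol pi0h Gh c lam t th j (Xs i w) (As i w)
             (Num.min (Ls i w) (Cs i w)))%:E)%E
       = lag_grad px PLC pol c lam t th j)
  /\
  ((forall x a, pi0h x a = pi0 x a) \/ (forall x a, Sh x a t = surv PLC x a t) ->
     forall j : 'I_m,
       (\int[P]_w ((n%:R)^-1 * \sum_(i < n)
           dr_term pol pi0h Gh Sh c lam t th j (Xs i w) (As i w)
             (Num.min (Ls i w) (Cs i w)))%:E)%E
       = lag_grad px PLC pol c lam t th j).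
Proof.
move=> _ _ n_gt0 pi0_ge0 pi0_sum1 mpi0 pol_ge0 _ _ pi0_supp _ mPLC PLC_indep
  mpol mpi0h mGh mSh mc mdlogpi pol_gt0 mXs mAs mLs mCs law _ int_ips int_dr _ Gh_cens.
have Gh_gt0 x a : 0 < pol th x a -> 0 < Gh t x a by case/pol_gt0.
have mean F : (forall a b, measurable_fun setT (fun x => F x a b)) ->
    (forall i, P.-integrable setT
       (fun w => (F (Xs i w) (As i w) (t < Num.min (Ls i w) (Cs i w)))%:E)) ->
    (\int[P]_w ((n%:R)^-1 * \sum_(i < n)
        F (Xs i w) (As i w) (t < Num.min (Ls i w) (Cs i w)))%:E =
     \int[px]_x (\sum_(a : A) pi0 x a *
        \sum_(b : bool) obs_prob PLC t x a b * F x a b)%:E)%E.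
  move=> mF intF; apply: (integral_mean n_gt0 intF) => i.
  exact (sample_expectation pi0_ge0 mpi0 mPLC PLC_indep
    (mXs i) (mAs i) (mLs i) (mCs i) (law i) mF (intF i)).
split=> [pi0hE j | model_ok j]; rewrite /lag_grad.
- rewrite (mean (ips_term_ind pol th c pi0h Gh lam t j)); last 2 first.
  + exact: measurable_ips_term_ind.
  + by move=> i; exact (int_ips i j).
  by apply: eq_integral => x _; rewrite ips_term_ind_mean // => a; rewrite pi0hE.
- rewrite (mean (dr_term_ind pol th c pi0h Gh Sh lam t j)); last 2 first.
  + exact: measurable_dr_term_ind.
  + by move=> i; exact (int_dr i j).
  apply: eq_integral => x _; rewrite dr_term_ind_mean //.
  by case: model_ok => E; [left | right] => a; rewrite E.
Qed.
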